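(* Let $d\geq 1$ be odd, and let $Q$ be a real hyperbolic polynomial of degree $d$ with positive leading coefficient and nonzero constant term. - If $Q$ defines the moduli order admitting equalities $r_{PP}^0$, then all coefficients of $Q$ are nonzero and $Q$ defines the sign pattern $\Sigma_-$. - If $Q$ defines $r_{NN}^0$, then all coefficients of $Q$ are nonzero and $Q$ defines the sign pattern $\Sigma_+$.
   Context: A hyperbolic polynomial (HP) is a real univariate polynomial all of whose roots are real. A moduli order admitting equalities (MOAE) of length $d$ is a string of $d$ letters $P$/$N$ separated by $\leq$. A HP $Q$ of degree $d$ with nonzero constant term defines such a string if its $d$ roots, counted with multiplicity, can be listed as $z_1,\dots,z_d$ with $|z_1|\leq|z_2|\leq\dots\leq|z_d|$, where $z_i>0$ when the $i$-th letter is $P$ and $z_i<0$ when it is $N$. $r_{PP}^0$ is the alternating string $P\leq N\leq P\leq N\leq\dots\leq P$ (odd length, beginning and ending with $P$). $r_{NN}^0$ is $N\leq P\leq N\leq\dots\leq N$ (odd length, beginning and ending with $N$). The sign pattern of a polynomial $a_dx^d+\dots+a_0$ with all $a_j\neq 0$ is $(\mathrm{sgn}(a_d),\dots,\mathrm{sgn}(a_0))$. $\Sigma_+=(+,+,-,-,+,+,-,-,\dots)$ has entry $+$ in position $k$ ($k=0,\dots,d$, i.e. the sign of the coefficient of $x^{d-k}$) iff $k\equiv0,1\pmod 4$. $\Sigma_-=(+,-,-,+,+,-,-,+,\dots)$ has entry $+$ in position $k$ iff $k\equiv 0,3\pmod 4$. *)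

From HB Require Import structures.
From mathcomp Require Import all_boot all_order all_algebra.
From mathcomp Require Import reals.
Set Implicit Arguments. Unset Strict Implicit. Unset Printing Implicit Defensive.
Import Order.TTheory GRing.Theory Num.Theory.
Local Open Scope ring_scope.

Definition hyperbolic (R : realType) (Q : {poly R}) : Prop :=
  exists s : seq R, Q = lead_coef Q *: \prod_(z <- s) ('X - z%:P).

(* A moduli order admitting equalities: a string of letters P/N,
   encoded as a seq bool with true = P and false = N. *)
Definition MOAE := seq bool.

Definition defines_MOAE (R : realType) (Q : {poly R}) (m : MOAE) : Prop :=
  exists z : seq R,
    [/\ size z = size m,
        Q = lead_coef Q *: \prod_(x <- z) ('X - x%:P),
        sorted (fun x y : R => `|x| <= `|y|) z &
        forall i, (i < size m)%N ->
          if nth false m i then 0 < nth 0 z i else nth 0 z i < 0].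

(* r_PP^0 of length d: P <= N <= P <= ... (letter i, 0-indexed, is P iff i even). *)
Definition r_PP0 (d : nat) : MOAE := mkseq (fun i => ~~ odd i) d.
(* r_NN^0 of length d: N <= P <= N <= ... (letter i is P iff i odd). *)
Definition r_NN0 (d : nat) : MOAE := mkseq (fun i => odd i) d.

(* Sign patterns, as predicates on position k = 0..d (sign of coeff of x^(d-k)). *)
Definition Sigma_plus (k : nat) : bool := (k %% 4 == 0)%N || (k %% 4 == 1)%N.
Definition Sigma_minus (k : nat) : bool := (k %% 4 == 0)%N || (k %% 4 == 3)%N.

Definition defines_sign_pattern (R : realType) (Q : {poly R}) (d : nat)
    (sigma : nat -> bool) : Prop :=
  forall k, (k <= d)%N ->
    if sigma k then 0 < Q`_(d - k) else Q`_(d - k) < 0.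

From HB Require Import structures.
From mathcomp Require Import all_boot all_order all_algebra.
From mathcomp Require Import reals.
From mathcomp Require Import zify ring lra.
Set Implicit Arguments. Unset Strict Implicit. Unset Printing Implicit Defensive.
Import Order.TTheory GRing.Theory Num.Theory.
Local Open Scope ring_scope.

(* Let z_0, ..., z_(n-1) be real roots listed by nondecreasing modulus with
   alternating signs, z_i having the sign of (-1)^(b+i): b = 0 is the moduli
   order r_PP^0 and b = 1 is r_NN^0.  Write c_k for the coefficient of x^(n-k)
   in (x - z_0)...(x - z_(n-1)) and u_k = (-1)^(C(k,2) + (b+n)k) c_k for its
   normalized version; the signs (-1)^C(k,2) form the pattern Sigma_+ and the
   signs (-1)^(C(k,2)+k) the pattern Sigma_-.  Appending a root z_n, of
   modulus a >= |z_(n-1)| and sign (-1)^(b+n), transforms u into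
   u'_k = (-1)^k u_k + a u_(k-1).
   This transformation preserves an invariant of u ("admissible"): every u_k
   is >= 0, positive for even k (for every k when n is odd), and
   u_k <= |z_(n-1)| u_(k-1) for odd k, strictly when n is even.  Hence in odd
   degree d every normalized coefficient is positive, i.e. the coefficients
   follow the sign pattern (-1)^(C(k,2)+(b+d)k), which is Sigma_- for r_PP^0
   and Sigma_+ for r_NN^0.  The file establishes, in order: the binomial
   description of the sign patterns, the invariance of admissibility, the
   recursion of normalized coefficients along the roots, and the theorem. *)

Lemma Sigma_plusS k : Sigma_plus k.+1 = Sigma_minus k.
Proof.
rewrite /Sigma_plus /Sigma_minus -addn1 -modnDml.
by have := ltn_pmod k (isT : (0 < 4)%N); case: (k %% 4)%N => [|[|[|[|r]]]].
Qed.

Lemma Sigma_minusS k : Sigma_minus k.+1 = ~~ Sigma_plus k.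
Proof.
rewrite /Sigma_plus /Sigma_minus -addn1 -modnDml.
by have := ltn_pmod k (isT : (0 < 4)%N); case: (k %% 4)%N => [|[|[|[|r]]]].
Qed.

Lemma odd_binS k : odd 'C(k.+1, 2) = odd 'C(k, 2) (+) odd k.
Proof. by rewrite binS bin1 oddD. Qed.

Lemma Sigma_binomial k :
  Sigma_plus k = ~~ odd 'C(k, 2) /\ Sigma_minus k = ~~ odd 'C(k.+1, 2).
Proof.
elim: k => [|k [IHp IHm]]; first by [].
rewrite Sigma_plusS Sigma_minusS IHp IHm; split=> //.
by rewrite !odd_binS /=; case: (odd 'C(k, 2)); case: (odd k).
Qed.

Section Signs.
Variable R : pzRingType.

(* The expected sign of the k-th coefficient from the top of a product of
   alternating roots, m being the degree shifted by the sign offset. *)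
Definition sgn (m k : nat) : R := (-1) ^+ ('C(k, 2) + m * k).

Lemma sgn_oddE m k : sgn m k = (-1) ^+ (odd 'C(k, 2) (+) odd m && odd k).
Proof. by rewrite /sgn -signr_odd oddD oddM. Qed.

Lemma sgn0 m : sgn m 0 = 1.
Proof. by rewrite /sgn muln0. Qed.

Lemma sgnS m k : sgn m.+1 k = (-1) ^+ k * sgn m k.
Proof.
rewrite !sgn_oddE -[(-1) ^+ k]signr_odd -signr_addb /=.
by case: (odd m); case: (odd k); case: (odd 'C(k, 2)).
Qed.

Lemma sgnSS m k : sgn m.+1 k.+1 = (-1) ^+ m.+1 * sgn m k.
Proof.
rewrite !sgn_oddE -[(-1) ^+ m.+1]signr_odd -signr_addb odd_binS /=.
by case: (odd m); case: (odd k); case: (odd 'C(k, 2)).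
Qed.

Lemma sgn_sqr m k : sgn m k * sgn m k = 1.
Proof. by rewrite -exprD -signr_odd addnn odd_double. Qed.

Lemma sgn_Sigma m k :
  sgn m k = if (if odd m then Sigma_minus else Sigma_plus) k then 1 else -1.
Proof.
have [Sp Sm] := Sigma_binomial k.
rewrite sgn_oddE; case: (odd m); rewrite /= ?Sp ?Sm ?odd_binS;
  by case: (odd k); case: (odd 'C(k, 2)); rewrite ?expr0 ?expr1.
Qed.
End Signs.

Section Admissible.
Variable R : realDomainType.
Implicit Types (u v : nat -> R) (M a : R).

(* The invariant of the normalized coefficients u_0, ..., u_n of a degree-n
   product whose largest root has modulus M. *)
Definition admissible (n : nat) M u : Prop :=
  [/\ forall k, (n < k)%N -> u k = 0,
      forall k, 0 <= u k,
      forall k, (k <= n)%N -> odd n || ~~ odd k -> 0 < u k &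
      forall k, odd k -> (k <= n)%N ->
        u k <= M * u k.-1 /\ (~~ odd n -> u k < M * u k.-1)].

(* The effect on normalized coefficients of appending a root of modulus a. *)
Definition twist a u (k : nat) : R :=
  (-1) ^+ k * u k + (if k is j.+1 then a * u j else 0).

Lemma twist0 a u : twist a u 0 = u 0.
Proof. by rewrite /twist expr0 mul1r addr0. Qed.

Lemma twist_even a u k : ~~ odd k.+1 -> twist a u k.+1 = u k.+1 + a * u k.
Proof. by move=> ev; rewrite /twist -signr_odd (negbTE ev) expr0 mul1r. Qed.

Lemma twist_odd a u k : odd k.+1 -> twist a u k.+1 = a * u k - u k.+1.
Proof. by move=> od; rewrite /twist -signr_odd od expr1 mulN1r addrC. Qed.

Lemma admissible_eq n M u v : u =1 v -> admissible n M u -> admissible n M v.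
Proof. by move=> uv [u0 uge upos ubd]; split=> k; rewrite -?uv; auto. Qed.

Section Twist.
Variables (n : nat) (M a : R) (u : nat -> R).
Hypotheses (Ma : M <= a) (a_gt0 : 0 < a).
Hypothesis u_vanish : forall k, (n < k)%N -> u k = 0.
Hypothesis u_ge0 : forall k, 0 <= u k.
Hypothesis u_gt0 : forall k, (k <= n)%N -> odd n || ~~ odd k -> 0 < u k.
Hypothesis u_bound : forall k, odd k -> (k <= n)%N ->
  u k <= M * u k.-1 /\ (~~ odd n -> u k < M * u k.-1).

Lemma ratio_le k : odd k -> u k <= a * u k.-1.
Proof.
move=> ok; case: (leqP k n) => [kn|nk]; last by rewrite u_vanish // mulr_ge0 ?u_ge0 ?ltW.
by have [uM _] := u_bound ok kn; have := ler_wpM2r (u_ge0 k.-1) Ma; lra.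
Qed.

Lemma twist_ge k : ~~ odd k -> u k <= twist a u k.
Proof.
case: k => [|k] ev; first by rewrite twist0 lexx.
by rewrite twist_even //; have := mulr_ge0 (ltW a_gt0) (u_ge0 k); lra.
Qed.

Lemma twist_vanish k : (n.+1 < k)%N -> twist a u k = 0.
Proof. by case: k => [|k] // nk; rewrite /twist !u_vanish ?mulr0 ?addr0 //; lia. Qed.

(* Nonnegativity at odd k is exactly the ratio bound u_k <= a u_(k-1). *)
Lemma twist_ge0 k : 0 <= twist a u k.
Proof.
case: k => [|k]; first by rewrite twist0.
case: (boolP (odd k.+1)) => ok; first by rewrite twist_odd //; have := ratio_le ok; lra.
by rewrite twist_even //; have := u_ge0 k; have := u_ge0 k.+1; have := a_gt0; nra.
Qed.

(* Strict positivity at odd k uses the strict ratio bound of even degree. *)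
Lemma twist_gt0 k : (k <= n.+1)%N -> odd n.+1 || ~~ odd k -> 0 < twist a u k.
Proof.
case: k => [|k] kn par; first by rewrite twist0 u_gt0 ?orbT.
case: (boolP (odd k.+1)) => ok.
  have ev_n : ~~ odd n by move: par; rewrite ok /= orbF.
  have uk : 0 < u k by apply: u_gt0; [lia | apply/orP; right].
  rewrite twist_odd //; case: (leqP k.+1 n) => [k1n|nk1].
    have [_ /(_ ev_n)] := u_bound ok k1n.
    by have := ler_wpM2r (ltW uk) Ma; lra.
  by rewrite (u_vanish nk1) subr0 mulr_gt0.
have : 0 < u k \/ 0 < u k.+1.
  case: (boolP (odd n)) => on; [left | right].
    by apply: u_gt0; [lia | rewrite on].
  have kn' : k != n by apply: contraTneq ok => ->; rewrite negbK.
  by apply: u_gt0; [lia | rewrite ok orbT].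
rewrite twist_even // => -[] pos;
  by have := u_ge0 k; have := u_ge0 k.+1; have := a_gt0; nra.
Qed.

Lemma twist_bound k : odd k -> (k <= n.+1)%N ->
  twist a u k <= a * twist a u k.-1 /\
  (~~ odd n.+1 -> twist a u k < a * twist a u k.-1).
Proof.
case: k => [|k] // ok kn /=.
have := ler_wpM2l (ltW a_gt0) (twist_ge ok).
rewrite twist_odd //; split; first by have := u_ge0 k.+1; lra.
move=> odd_n; have : 0 < u k.+1.
  by apply: u_gt0; rewrite ?negbK ?odd_n //; apply/negP => /eqP; lia.
lra.
Qed.
End Twist.

Lemma admissible_twist n M a u : M <= a -> 0 < a ->
  admissible n M u -> admissible n.+1 a (twist a u).
Proof.
move=> Ma a0 [u0 uge upos ubd]; split.
- exact: twist_vanish Ma a0 u0.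
- exact: twist_ge0 Ma a0 u0 uge ubd.
- exact: twist_gt0 Ma a0 u0 uge upos ubd.
- exact: twist_bound Ma a0 uge upos.
Qed.
End Admissible.

Section RootProducts.
Variable R : realDomainType.
Implicit Types (z : seq R) (x : R) (p : {poly R}).

Definition root_prod z : {poly R} := \prod_(x <- z) ('X - x%:P).

Definition topcoef (n : nat) p (k : nat) : R :=
  if (k <= n)%N then p`_(n - k) else 0.

Lemma topcoef_mulXsubC n p x k :
  topcoef n.+1 (p * ('X - x%:P)) k.+1 = topcoef n p k.+1 - x * topcoef n p k.
Proof.
rewrite /topcoef ltnS subSS mulrBr coefB coefMX coefMC.
case: (ltngtP k n) => [kn|nk|->].
- by rewrite subnS (mulrC x) ifF //; apply/eqP; lia.
- by rewrite mulr0 subr0.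
- by rewrite subnn mulrC.
Qed.

Lemma root_prod_rcons z x : root_prod (rcons z x) = root_prod z * ('X - x%:P).
Proof. by rewrite /root_prod big_rcons. Qed.

(* A product of linear factors is monic. *)
Lemma topcoef_root_prod0 z : topcoef (size z) (root_prod z) 0 = 1.
Proof.
rewrite /topcoef subn0 -[size z]/((size z).+1.-1) -(size_prod_XsubC z id).
by rewrite -lead_coefE; apply/monicP/monic_prod_XsubC.
Qed.

Definition ncoef (b : nat) z (k : nat) : R :=
  @sgn R (b + size z) k * topcoef (size z) (root_prod z) k.

Definition alternating (b : nat) z : Prop :=
  sorted (fun x y => `|x| <= `|y|) z /\
  forall i, (i < size z)%N -> 0 < (-1) ^+ (b + i) * nth 0 z i.

Lemma alternating_rcons b z x : alternating b (rcons z x) ->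
  [/\ alternating b z, `|last 0 z| <= `|x| & 0 < (-1) ^+ (b + size z) * x].
Proof.
move=> [srt sgns]; split.
- split=> [|i iz]; last by have := sgns i; rewrite size_rcons nth_rcons iz; apply; lia.
  by case: z srt {sgns} => [|y z] //=; rewrite rcons_path => /andP [].
- case: z srt {sgns} => [|y z] /=; first by rewrite normr0 normr_ge0.
  by rewrite rcons_path => /andP [].
- by have := sgns (size z); rewrite size_rcons nth_rcons ltnn eqxx; apply.
Qed.

Lemma ncoef_rcons b z x : 0 < (-1) ^+ (b + size z) * x ->
  ncoef b (rcons z x) =1 twist `|x| (ncoef b z).
Proof.
move=> sx [|k].
  by rewrite twist0 /ncoef !sgn0 !mul1r !topcoef_root_prod0.
have normx : `|x| = (-1) ^+ (b + size z) * x.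
  by rewrite -(normrMsign (b + size z)) gtr0_norm.
rewrite /ncoef /twist size_rcons addnS root_prod_rcons topcoef_mulXsubC.
by rewrite mulrBr {1}sgnS sgnSS normx !exprS; ring.
Qed.

Lemma ncoef_nil b k : ncoef b [::] k = (k == 0)%:R.
Proof.
rewrite /ncoef /topcoef /root_prod big_nil leqn0.
by case: k => [|k] /=; rewrite ?sgn0 ?coef1 ?mul1r ?mulr0.
Qed.

Lemma admissible_ncoef b z : alternating b z ->
  admissible (size z) `|last 0 z| (ncoef b z).
Proof.
elim/last_ind: z => [|z x IH].
  move=> _; split=> [k|k|k|k]; rewrite ?ncoef_nil.
  - by case: k.
  - exact: ler0n.
  - by rewrite leqn0 => /eqP -> _; exact: ltr01.
  - by case: k.
move=> /alternating_rcons [alt lastx sx].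
rewrite size_rcons last_rcons.
apply: admissible_eq (fsym (ncoef_rcons sx)) _.
apply: admissible_twist lastx _ (IH alt).
by rewrite -(normrMsign (b + size z)) normr_gt0 gt_eqF.
Qed.

Lemma ncoef_gt0 b z k : alternating b z -> odd (size z) -> (k <= size z)%N ->
  0 < ncoef b z k.
Proof.
by move=> alt oz kz; have [_ _ pos _] := admissible_ncoef alt; rewrite pos ?oz.
Qed.
End RootProducts.

Section SignPatterns.
Variable R : realType.
Implicit Types (Q : {poly R}) (z : seq R).

Lemma sign_pattern_coef_neq0 Q d sigma : defines_sign_pattern Q d sigma ->
  forall j, (j <= d)%N -> Q`_j != 0.
Proof.
move=> pat j jd; have := pat (d - j)%N (leq_subr j d); rewrite subKn //.
by case: (sigma _) => [/lt0r_neq0 | /ltr0_neq0].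
Qed.

Lemma alternating_sign_pattern b d Q z : odd d -> 0 < lead_coef Q ->
  size z = d -> Q = lead_coef Q *: root_prod z -> alternating b z ->
  (forall j, (j <= d)%N -> Q`_j != 0) /\
  defines_sign_pattern Q d (if odd (b + d) then Sigma_minus else Sigma_plus).
Proof.
move=> od lc_gt0 sz EQ alt.
suff pat : defines_sign_pattern Q d (if odd (b + d) then Sigma_minus else Sigma_plus).
  by split=> //; exact: sign_pattern_coef_neq0 pat.
move=> k kd; have pos : 0 < ncoef b z k by apply: ncoef_gt0; rewrite ?sz.
have -> : Q`_(d - k) = lead_coef Q * (@sgn R (b + d) k * ncoef b z k).
  by rewrite {1}EQ coefZ /ncoef sz (mulrA (@sgn R _ _)) sgn_sqr mul1r /topcoef kd.
rewrite sgn_Sigma; case: ((if odd (b + d) then _ else _) k);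
  by rewrite ?mul1r ?mulN1r ?mulrN ?oppr_lt0 mulr_gt0.
Qed.

Lemma MOAE_alternating Q d b :
  defines_MOAE Q (mkseq (fun i => ~~ odd (b + i)) d) ->
  exists z, [/\ size z = d, Q = lead_coef Q *: root_prod z & alternating b z].
Proof.
move=> [z [sz EQ srt sg]]; rewrite size_mkseq in sz sg.
exists z; split=> //; split=> // i iz.
have := sg i; rewrite -sz nth_mkseq -?sz // => /(_ iz).
by rewrite -signr_odd; case: (odd (b + i)); rewrite ?expr1 ?mulN1r ?oppr_gt0 ?mul1r.
Qed.
End SignPatterns.

Theorem theorem1p10 (R : realType) (d : nat) (Q : {poly R}) :
  (1 <= d)%N -> odd d ->
  hyperbolic Q ->
  size Q = d.+1 ->
  0 < lead_coef Q ->
  Q`_0 != 0 ->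
  (defines_MOAE Q (r_PP0 d) ->
     (forall j, (j <= d)%N -> Q`_j != 0) /\ defines_sign_pattern Q d Sigma_minus) /\
  (defines_MOAE Q (r_NN0 d) ->
     (forall j, (j <= d)%N -> Q`_j != 0) /\ defines_sign_pattern Q d Sigma_plus).
Proof.
move=> _ od _ _ lc_gt0 _; split.
  move=> /(@MOAE_alternating _ Q d 0) [z [sz EQ alt]].
  by have := alternating_sign_pattern od lc_gt0 sz EQ alt; rewrite add0n od.
have -> : r_NN0 d = mkseq (fun i => ~~ odd (1 + i)) d.
  by apply: eq_mkseq => i; rewrite negbK.
move=> /MOAE_alternating [z [sz EQ alt]].
by have := alternating_sign_pattern od lc_gt0 sz EQ alt; rewrite /= od.
Qed.
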